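(* Let $R$ be a commutative noetherian ring, $\mathfrak{a}$ an ideal contained in the Jacobson radical of $R$, and $M$ a finitely generated $R$-module. Then among the $\mathfrak{a}$-adically complete $R$-submodules of $M$ there is a unique maximal one (with respect to inclusion).
   Context: A module $N$ is $\mathfrak{a}$-adically complete if the natural map $N\to \varprojlim_n N/\mathfrak{a}^nN$ is an isomorphism. The unique maximal $\mathfrak{a}$-adically complete submodule of $M$ is denoted $C_{\mathfrak{a}}(M)$ (the analytic conductor of $M$). *)

From HB Require Import structures.
From mathcomp Require Import all_boot all_algebra.
Set Implicit Arguments. Unset Strict Implicit. Unset Printing Implicit Defensive.
Import GRing.Theory.
Local Open Scope ring_scope.

Section Defs.
Variable R : comPzRingType.

Definition is_ideal (I : R -> Prop) : Prop :=
  [/\ I 0, (forall x y, I x -> I y -> I (x + y)) & (forall r x, I x -> I (r * x))].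

Definition fg_ideal (I : R -> Prop) : Prop :=
  exists (k : nat) (g : 'I_k -> R),
    forall x, I x <-> exists c : 'I_k -> R, x = \sum_(i < k) c i * g i.

Definition noetherian_ring : Prop :=
  forall I : R -> Prop, is_ideal I -> fg_ideal I.

Definition maximal_ideal (m : R -> Prop) : Prop :=
  [/\ is_ideal m, ~ m 1 &
      forall J : R -> Prop, is_ideal J -> (forall x, m x -> J x) ->
        J 1 \/ (forall x, J x -> m x)].

Definition jacobson (x : R) : Prop :=
  forall m : R -> Prop, maximal_ideal m -> m x.

Variable M : lmodType R.

Definition is_submod (N : M -> Prop) : Prop :=
  [/\ N 0, (forall x y, N x -> N y -> N (x + y)) & (forall r x, N x -> N (r *: x))].

Definition fg_module : Prop :=
  exists (k : nat) (g : 'I_k -> M),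
    forall m : M, exists c : 'I_k -> R, m = \sum_(i < k) c i *: g i.

Definition idmul (a : R -> Prop) (N : M -> Prop) : M -> Prop :=
  fun m => exists (k : nat) (r : 'I_k -> R) (x : 'I_k -> M),
    (forall i, a (r i) /\ N (x i)) /\ m = \sum_(i < k) r i *: x i.

Fixpoint apow (a : R -> Prop) (N : M -> Prop) (n : nat) : M -> Prop :=
  match n with
  | 0 => N
  | n'.+1 => idmul a (apow a N n')
  end.

(* N is a-adically complete: the natural map N -> lim_n N / a^n N is
   injective (intersection of the a^n N is 0) and surjective (every
   compatible family, given by lifts x_n with x_{n+1} - x_n in a^n N,
   comes from some y in N). *)
Definition adically_complete (a : R -> Prop) (N : M -> Prop) : Prop :=
  (forall x, N x -> (forall n, apow a N n x) -> x = 0) /\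
  (forall x : nat -> M, (forall n, N (x n)) ->
     (forall n, apow a N n (x n.+1 - x n)) ->
     exists y, N y /\ forall n, apow a N n (y - x n)).

Definition maximal_complete (a : R -> Prop) (N : M -> Prop) : Prop :=
  [/\ is_submod N, adically_complete a N &
      forall N' : M -> Prop, is_submod N' -> adically_complete a N' ->
        (forall x, N x -> N' x) -> forall x, N' x -> N x].

End Defs.

From HB Require Import structures.
From mathcomp Require Import all_boot all_algebra.
From Stdlib Require Import Classical ClassicalEpsilon.
Set Implicit Arguments. Unset Strict Implicit. Unset Printing Implicit Defensive.
Import GRing.Theory.
Local Open Scope ring_scope.

(* M is noetherian, so it has a maximal element N among its a-adically
   complete submodules, and N contains every complete submodule N': the sum
   N + N' is complete again.  Indeed a^n (N + N') = a^n N + a^n N' splits a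
   Cauchy sequence of N + N' into Cauchy sequences of N and N', and N + N' is
   separated by the Krull intersection theorem  /\_n a^n M = 0.
   Krull's theorem is proved without Artin-Rees: with K = /\_n a^n M, take L
   maximal among the submodules with L /\ K = aK.  For b in a the chain
   (L : b^j) stabilises, after which L + b^j M still meets K in aK, so
   b^j M <= L.  Hence a^n M <= L for large n, so K = aK, and K = 0 by
   Nakayama's lemma since a lies in the Jacobson radical. *)

Lemma eventually_seq (T : eqType) (P : nat -> T -> Prop) (s : seq T) :
  (forall m n, (m <= n)%N -> forall x, P m x -> P n x) ->
  (forall x, x \in s -> exists n, P n x) -> exists n, forall x, x \in s -> P n x.
Proof.
move=> Pmono; elim: s => [|y s IH] sP; first by exists 0%N.
have [m Pmy] := sP y (mem_head _ _).
have [n Pns] : exists n, forall x, x \in s -> P n x.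
  by apply: IH => x sx; apply: sP; rewrite in_cons sx orbT.
exists (maxn m n) => x; rewrite in_cons => /orP [/eqP ->|sx].
  exact: Pmono (leq_maxl m n) _ Pmy.
exact: Pmono (leq_maxr m n) _ (Pns _ sx).
Qed.

Section Submodules.
Variables (R : comPzRingType) (V : lmodType R).
Implicit Types (N P : V -> Prop) (s : seq V).

Lemma submod0 {N} : is_submod N -> N 0.
Proof. by case. Qed.

Lemma submodD {N x y} : is_submod N -> N x -> N y -> N (x + y).
Proof. by case=> _ + _; apply. Qed.

Lemma submodZ {N r x} : is_submod N -> N x -> N (r *: x).
Proof. by case=> _ _; apply. Qed.

Lemma submodB {N x y} : is_submod N -> N x -> N y -> N (x - y).
Proof.
by move=> NS Nx Ny; apply: submodD => //; rewrite -scaleN1r; apply: submodZ.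
Qed.

Lemma submod_sum N I (r : seq I) (P : pred I) (F : I -> V) :
  is_submod N -> (forall i, P i -> N (F i)) -> N (\sum_(i <- r | P i) F i).
Proof. by move=> [N0 ND _] NF; apply: big_ind. Qed.

Lemma submodI N P : is_submod N -> is_submod P -> is_submod (fun x => N x /\ P x).
Proof.
move=> NS PS; split.
- by split; apply: submod0.
- by move=> x y [Nx Px] [Ny Py]; split; apply: submodD.
- by move=> r x [Nx Px]; split; apply: submodZ.
Qed.

Definition msum N P : V -> Prop := fun x => exists u v, [/\ N u, P v & x = u + v].

Lemma msum_submod N P : is_submod N -> is_submod P -> is_submod (msum N P).
Proof.
move=> NS PS; split.
- by exists 0, 0; rewrite addr0; split=> //; apply: submod0.
- move=> _ _ [u [v [Nu Pv ->]]] [u' [v' [Nu' Pv' ->]]].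
  by exists (u + u'), (v + v'); rewrite addrACA; split=> //; apply: submodD.
- move=> r _ [u [v [Nu Pv ->]]].
  by exists (r *: u), (r *: v); rewrite scalerDr; split=> //; apply: submodZ.
Qed.

Lemma msuml N P x : is_submod P -> N x -> msum N P x.
Proof. by move=> PS Nx; exists x, 0; rewrite addr0; split=> //; apply: submod0. Qed.

Lemma msumr N P x : is_submod N -> P x -> msum N P x.
Proof. by move=> NS Px; exists 0, x; rewrite add0r; split=> //; apply: submod0. Qed.

Fixpoint span_seq s : V -> Prop :=
  match s with
  | [::] => fun x => x = 0
  | g :: t => fun x => exists c y, span_seq t y /\ x = c *: g + y
  end.

Lemma span_seq_submod s : is_submod (span_seq s).
Proof.
elim: s => [|g t tS] /=.
  by split=> [|_ _ -> ->|r _ ->]; rewrite ?addr0 ?scaler0.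
split.
- by exists 0, 0; rewrite scale0r addr0; split; first apply: submod0.
- move=> _ _ [c [y [ty ->]]] [c' [y' [ty' ->]]].
  by exists (c + c'), (y + y'); rewrite scalerDl addrACA; split; first apply: submodD.
- move=> r _ [c [y [ty ->]]].
  by exists (r * c), (r *: y); rewrite scalerDr scalerA; split; first apply: submodZ.
Qed.

Lemma span_seq_min s N : is_submod N -> (forall g, g \in s -> N g) ->
  forall x, span_seq s x -> N x.
Proof.
move=> NS; elim: s => [|g t IH] sN x /=; first by move->; apply: submod0.
move=> [c [y [ty ->]]]; apply: (submodD NS).
  by apply: (submodZ NS); apply: sN; rewrite mem_head.
by apply: IH ty => h th; apply: sN; rewrite in_cons th orbT.
Qed.

Lemma span_seq_mem s g : g \in s -> span_seq s g.
Proof.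
elim: s => [|h t IH] //=; rewrite in_cons => /orP [/eqP ->|tg].
  by exists 1, 0; rewrite scale1r addr0; split=> //; apply: submod0 (span_seq_submod t).
by exists 0, g; rewrite scale0r add0r; split=> //; apply: IH.
Qed.

Lemma span_seq_subset s s' : {subset s <= s'} -> forall x, span_seq s x -> span_seq s' x.
Proof.
by move=> ss'; apply: span_seq_min; [apply: span_seq_submod|move=> g /ss'/span_seq_mem].
Qed.

Lemma span_seq_sum k (g : 'I_k -> V) (c : 'I_k -> R) :
  span_seq [seq g i | i <- enum 'I_k] (\sum_(i < k) c i *: g i).
Proof.
apply: (submod_sum _ (span_seq_submod _)) => i _; apply/submodZ/span_seq_mem.
  exact: span_seq_submod.
by apply: map_f; rewrite mem_enum.
Qed.

Definition fg_submod N :=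
  exists s, (forall g, g \in s -> N g) /\ (forall x, N x -> span_seq s x).

Definition noetherian_module := forall N, is_submod N -> fg_submod N.

Lemma noetherian_chain_stable (c : nat -> V -> Prop) : noetherian_module ->
  (forall n, is_submod (c n)) -> (forall n x, c n x -> c n.+1 x) ->
  exists n, forall x, c n.+1 x -> c n x.
Proof.
move=> noethV cS c_incr.
have c_mono : forall m n, (m <= n)%N -> forall x, c m x -> c n x.
  by apply: (homo_leq (r := fun A B => forall x, A x -> B x)) => // A B C AB BC x /AB/BC.
pose U x := exists n, c n x.
have US : is_submod U.
  split.
  - by exists 0%N; apply: submod0.
  - move=> x y [m cmx] [n cny]; exists (maxn m n); apply: (submodD (cS _)).
      by apply: c_mono cmx; apply: leq_maxl.
    by apply: c_mono cny; apply: leq_maxr.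
  - by move=> r x [n cnx]; exists n; apply: submodZ.
have [s [sU Us]] := noethV U US.
have [n sn] := eventually_seq c_mono sU.
by exists n => x cx; apply: (span_seq_min (cS n) sn); apply: Us; exists n.+1.
Qed.

Lemma noetherian_maximal (F : (V -> Prop) -> Prop) N0 : noetherian_module ->
  (forall N, F N -> is_submod N) -> F N0 ->
  exists N, F N /\ forall N', F N' -> (forall x, N x -> N' x) -> forall x, N' x -> N x.
Proof.
move=> noethV FS FN0; apply: NNPP => no_max.
have step (N : {N | F N}) : exists N' : {N | F N},
    (forall x, sval N x -> sval N' x) /\ exists x, sval N' x /\ ~ sval N x.
  case: N => N FN; apply: NNPP => no_step; apply: no_max; exists N.
  split=> // N' FN' NN' x N'x; apply: NNPP => Nx; apply: no_step.
  by exists (exist _ N' FN'); split=> //; exists x.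
have [next nextP] := ClassicalEpsilon.choice _ step.
pose c n := sval (iter n next (exist _ N0 FN0)).
have [n cn] := noetherian_chain_stable noethV (fun n => FS _ (svalP _))
  (fun n => (nextP _).1 : forall x, c n x -> c n.+1 x).
by have [x [cx ncx]] := (nextP (iter n next (exist _ N0 FN0))).2; apply/ncx/cn.
Qed.

End Submodules.

Lemma noetherian_regular (R : comPzRingType) :
  noetherian_ring R -> noetherian_module R^o.
Proof.
move=> noethR I IS; have [k [g Ig]] := noethR I IS.
exists [seq g i | i <- enum 'I_k]; split; last by move=> x /Ig [c ->]; apply: span_seq_sum.
move=> _ /mapP [i _ ->]; apply/Ig; exists (fun j => (j == i)%:R).
by rewrite (bigD1 i) //= eqxx mul1r big1 ?addr0 // => j /negbTE ->; rewrite mul0r.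
Qed.

Section FiniteGeneration.
Variables (R : comPzRingType) (V : lmodType R).
Hypothesis noethR : noetherian_ring R.

Definition coeff_ideal (N : V -> Prop) (h : V) t : R^o -> Prop :=
  fun c => exists y, span_seq t y /\ N (c *: h + y).

Lemma coeff_ideal_submod N h t : is_submod N -> is_submod (coeff_ideal N h t).
Proof.
move=> NS; have tS := span_seq_submod t; split.
- by exists 0; rewrite scale0r addr0; split; apply: submod0.
- move=> c c' [y [ty Ny]] [y' [ty' Ny']]; exists (y + y').
  by rewrite scalerDl addrACA; split; apply: submodD.
- move=> r c [y [ty Ny]]; exists (r *: y).
  by rewrite -scalerA -scalerDr; split; apply: submodZ.
Qed.

(* Lifting generators of [coeff_ideal N h t] to elements of [N], and adding
   generators of [N] intersected with [span_seq t], generates [N]. *)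
Lemma fg_submod_span_cons (h : V) t :
  (forall N, is_submod N -> (forall x, N x -> span_seq t x) -> fg_submod N) ->
  forall N, is_submod N -> (forall x, N x -> span_seq (h :: t) x) -> fg_submod N.
Proof.
move=> IH N NS Nsub; have tS := span_seq_submod t.
have [cs [csI Ics]] := noetherian_regular noethR (coeff_ideal_submod h t NS).
have [lift liftP] : exists lift : R -> V,
    forall c, c \in cs -> N (lift c) /\ span_seq t (lift c - c *: h).
  apply: (ClassicalEpsilon.choice
    (fun c w => c \in cs -> N w /\ span_seq t (w - c *: h))) => c.
  have [/csI [y [ty Ny]]|_] := boolP (c \in cs).
    by exists (c *: h + y) => _; split=> //; rewrite addrAC subrr add0r.
  by exists 0.
pose ws := [seq lift c | c <- cs]; have wsS := span_seq_submod ws.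
have wsN : forall w, span_seq ws w -> N w.
  by apply: (span_seq_min NS) => _ /mapP [c csc ->]; apply: (liftP c csc).1.
have lift_span : forall c : R^o, span_seq cs c ->
    exists w, span_seq ws w /\ span_seq t (w - c *: h).
  apply: span_seq_min; last first.
    move=> c csc; exists (lift c).
    by split; [apply/span_seq_mem/map_f|apply: (liftP c csc).2].
  split.
  - by exists 0; rewrite scale0r subr0; split; apply: submod0.
  - move=> c c' [w [wsw tw]] [w' [wsw' tw']]; exists (w + w').
    by rewrite scalerDl opprD addrACA; split; apply: submodD.
  - move=> r c [w [wsw tw]]; exists (r *: w).
    by rewrite -scalerA -scalerBr; split; apply: submodZ.
have [s' [s'N Ns']] := IH _ (submodI NS tS) (fun x => @proj2 _ _).
exists (ws ++ s'); split.
  move=> g; rewrite mem_cat => /orP [/mapP [c csc ->]|/s'N [] //].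
  exact: (liftP c csc).1.
move=> x Nx; have [c [z [tz ex]]] := Nsub x Nx.
have [w [wsw tw]] : exists w, span_seq ws w /\ span_seq t (w - c *: h).
  by apply/lift_span/Ics; exists z; rewrite -ex.
rewrite -(subrK w x); apply: (submodD (span_seq_submod _)).
  apply: (span_seq_subset (s := s')); first by move=> g; rewrite mem_cat orbC => ->.
  apply: Ns'; split; first by apply: (submodB NS) => //; apply: wsN.
  by rewrite ex [c *: h + z]addrC -addrA -opprB; apply: (submodB tS).
by apply: (span_seq_subset _ wsw) => g; rewrite mem_cat => ->.
Qed.

Lemma noetherian_fg_module : fg_module V -> noetherian_module V.
Proof.
move=> [k [g gen]].
suff fg_in_span (s : seq V) (N : V -> Prop) :
    is_submod N -> (forall x, N x -> span_seq s x) -> fg_submod N.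
  move=> N NS; apply: (fg_in_span [seq g i | i <- enum 'I_k] N NS) => x _.
  by have [c ->] := gen x; apply: span_seq_sum.
elim: s N => [|h t IH] N NS Nsub; last exact: (fg_submod_span_cons IH NS Nsub).
by exists [::].
Qed.

End FiniteGeneration.

Section IdealProduct.
Variables (R : comPzRingType) (M : lmodType R).
Implicit Types (a b : R -> Prop) (N P : M -> Prop).

Lemma idmul_ind a N (Q : M -> Prop) : Q 0 -> (forall x y, Q x -> Q y -> Q (x + y)) ->
  (forall r y, a r -> N y -> Q (r *: y)) -> forall x, idmul a N x -> Q x.
Proof.
move=> Q0 QD QZ _ [k [r [y [ry ->]]]]; apply: big_ind => // i _.
by have [] := ry i; apply: QZ.
Qed.

Lemma idmul0 a N : idmul a N 0.
Proof. by exists 0%N, (fun _ => 0), (fun _ => 0); split; [case|rewrite big_ord0]. Qed.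

Lemma idmul_scale a N r y : a r -> N y -> idmul a N (r *: y).
Proof. by move=> ar Ny; exists 1%N, (fun _ => r), (fun _ => y); rewrite big_ord1. Qed.

Lemma idmulD a N x y : idmul a N x -> idmul a N y -> idmul a N (x + y).
Proof.
move=> [k [r [u [ru ->]]]] [l [s [v [sv ->]]]].
exists (k + l)%N, (fun i => match split i with inl j => r j | inr j => s j end),
  (fun i => match split i with inl j => u j | inr j => v j end); split.
  by move=> i; case: (split i).
by rewrite big_split_ord /=; congr (_ + _); apply: eq_bigr => i _;
  rewrite ?(unsplitK (inl i)) ?(unsplitK (inr i)).
Qed.

Lemma idmulZ a N c x : is_ideal a -> idmul a N x -> idmul a N (c *: x).
Proof.
move=> [_ _ aM]; move: x; apply: idmul_ind.
- by rewrite scaler0; apply: idmul0.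
- by move=> x y cx cy; rewrite scalerDr; apply: idmulD.
- by move=> r y ar Ny; rewrite scalerA; apply: idmul_scale => //; apply: aM.
Qed.

Lemma idmul_submod a N : is_ideal a -> is_submod (idmul a N).
Proof. by move=> aI; split=> [|x y|r x]; [apply: idmul0|apply: idmulD|apply: idmulZ]. Qed.

Lemma idmulS a b N P : (forall r, a r -> b r) -> (forall x, N x -> P x) ->
  forall x, idmul a N x -> idmul b P x.
Proof.
move=> ab NP; apply: idmul_ind; [exact: idmul0|by move=> x y; apply: idmulD|].
by move=> r y ar Ny; apply: idmul_scale; [apply: ab|apply: NP].
Qed.

Lemma idmul_subset a N : is_submod N -> forall x, idmul a N x -> N x.
Proof.
move=> NS; apply: idmul_ind => [|x y|r y _].
- exact: submod0.
- exact: submodD.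
- exact: submodZ.
Qed.

Lemma apow_submod a N n : is_ideal a -> is_submod N -> is_submod (apow a N n).
Proof. by move=> aI NS; case: n => [|n] //=; apply: idmul_submod. Qed.

Lemma apow_subset a N n : is_ideal a -> is_submod N -> forall x, apow a N n x -> N x.
Proof.
move=> aI NS; elim: n => [|n IH] x //= anx.
exact: IH _ (idmul_subset (apow_submod n aI NS) anx).
Qed.

Lemma apowS a b N P n : (forall r, a r -> b r) -> (forall x, N x -> P x) ->
  forall x, apow a N n x -> apow b P n x.
Proof. by move=> ab NP; elim: n => [|n IH] //= x; apply: idmulS. Qed.

End IdealProduct.

Section Jacobson.
Variable R : comPzRingType.
Hypothesis noethR : noetherian_ring R.

Lemma noetherian_maximal_ideal (J : R -> Prop) : is_ideal J -> ~ J 1 ->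
  exists m, maximal_ideal m /\ forall x, J x -> m x.
Proof.
move=> JI J1.
pose F (I : R^o -> Prop) := [/\ is_submod I, forall x, J x -> I x & ~ I 1].
have [m [[mS Jm m1] mmax]] := noetherian_maximal (noetherian_regular noethR)
  (F := F) (fun _ => fun '(And3 IS _ _) => IS) (And3 JI (fun _ Jx => Jx) J1).
exists m; split=> //; split=> // I II mI.
have [I1|I1] := classic (I 1); [by left|right].
by apply: mmax => //; split=> // x /Jm /mI.
Qed.

Lemma jacobson_unit (r : R) : jacobson r -> exists u, u * (1 - r) = 1.
Proof.
move=> jr; apply: NNPP => nounit.
pose J (x : R) := exists c, x = c * (1 - r).
have JI : is_ideal J.
  split=> [|_ _ [c ->] [d ->]|s _ [c ->]]; first by exists 0; rewrite mul0r.
    by exists (c + d); rewrite mulrDl.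
  by exists (s * c); rewrite mulrA.
have J1 : ~ J 1 by move=> [c c1]; apply: nounit; exists c.
have [m [mmax Jm]] := noetherian_maximal_ideal JI J1.
have [[_ mD _] m1 _] := mmax.
apply: m1; rewrite -(subrK r 1); apply: mD (jr m mmax).
by apply: Jm; exists 1; rewrite mul1r.
Qed.

End Jacobson.

Section Nakayama.
Variables (R : comPzRingType) (M : lmodType R) (a : R -> Prop).
Hypotheses (noethR : noetherian_ring R) (aI : is_ideal a).
Hypothesis a_jacobson : forall x, a x -> jacobson x.

Lemma idmul_span_cons (g : M) t x : idmul a (span_seq (g :: t)) x ->
  exists rho z, [/\ a rho, idmul a (span_seq t) z & x = rho *: g + z].
Proof.
have [a0 aD aM] := aI; move: x; apply: idmul_ind.
- by exists 0, 0; rewrite scale0r addr0; split=> //; apply: idmul0.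
- move=> _ _ [r [z [ar tz ->]]] [r' [z' [ar' tz' ->]]].
  exists (r + r'), (z + z'); rewrite scalerDl addrACA.
  by split=> //; [apply: aD|apply: idmulD].
- move=> r _ ar [c [y [ty ->]]]; exists (r * c), (r *: y).
  by rewrite scalerDr scalerA; split=> //; [rewrite mulrC; apply: aM|apply: idmul_scale].
Qed.

Lemma nakayama_span (s : seq M) :
  (forall x, span_seq s x -> idmul a (span_seq s) x) -> forall x, span_seq s x -> x = 0.
Proof.
elim: s => [|g t IH] sa x //; have tS := span_seq_submod t.
have /sa/idmul_span_cons [rho [z [arho tz eg]]] := span_seq_mem (mem_head g t).
have [u urho] := jacobson_unit noethR (a_jacobson arho).
have ez : z = (1 - rho) *: g by rewrite scalerBl scale1r {1}eg addrAC subrr add0r.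
have tg : span_seq t g.
  have -> : g = u *: z by rewrite ez scalerA urho scale1r.
  exact: submodZ tS (idmul_subset tS tz).
have gt_t y : span_seq (g :: t) y -> span_seq t y.
  by move=> [c [w [tw ->]]]; apply: (submodD tS) => //; apply: submodZ.
have t_gt y : span_seq t y -> span_seq (g :: t) y.
  by apply: span_seq_subset => h th; rewrite in_cons th orbT.
move=> /gt_t tx; apply: IH tx => y /t_gt /sa; exact: idmulS.
Qed.

End Nakayama.

Definition ideal_span (R : comPzRingType) (bs : seq R) : R -> Prop := @span_seq R R^o bs.

Section KrullIntersection.
Variables (R : comPzRingType) (M : lmodType R).

Definition full : M -> Prop := fun=> True.

Lemma full_submod : is_submod full.
Proof. by []. Qed.

Definition scale_image (r : R) : M -> Prop := fun x => exists z, x = r *: z.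

Lemma scale_image_submod r : is_submod (scale_image r).
Proof.
split=> [|_ _ [z ->] [z' ->]|s _ [z ->]]; first by exists 0; rewrite scaler0.
  by exists (z + z'); rewrite scalerDr.
by exists (s *: z); rewrite !scalerA mulrC.
Qed.

Definition colon (L : M -> Prop) (r : R) : M -> Prop := fun x => L (r *: x).

Lemma colon_submod L r : is_submod L -> is_submod (colon L r).
Proof.
move=> LS; split=> [|x y Lx Ly|s x Lx]; rewrite /colon ?scaler0 ?scalerDr.
- exact: submod0.
- exact: submodD.
- by rewrite scalerA mulrC -scalerA; apply: submodZ.
Qed.

Lemma apow_span_cons (b : R) bs n m x :
  apow (ideal_span (b :: bs)) full (n + m) x ->
  msum (scale_image (b ^+ n)) (apow (ideal_span bs) full m) x.
Proof.
have bsI : is_ideal (ideal_span bs) := @span_seq_submod R R^o bs.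
have QS n' m' :=
  msum_submod (scale_image_submod (b ^+ n')) (apow_submod m' bsI full_submod).
move ek: (n + m)%N => k; elim: k => [|k IH] in n m x ek *.
  case: n m ek => [|n] [|m] // _ _.
  by apply: msuml full_submod _; exists x; rewrite scale1r.
apply: idmul_ind x; first exact: submod0 (QS n m).
  by move=> x y; apply: submodD (QS n m).
move=> _ y [s [w [bsw ->]]] yk; rewrite scalerDl; apply: (submodD (QS n m)).
  rewrite -scalerA; apply: (submodZ (QS n m)); case: n ek => [|n] ek.
    by apply: msuml; [exact: apow_submod|exists (b *: y); rewrite scale1r].
  have [_ [v [[z ->] bsv ->]]] := IH n m y (succn_inj ek) yk.
  rewrite scalerDr scalerA -exprS; apply: (submodD (QS n.+1 m)).
    by apply: msuml; [exact: apow_submod|exists z].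
  apply: msumr; first exact: scale_image_submod.
  exact: submodZ (apow_submod m bsI full_submod) _.
case: m ek => [|m] ek; first by apply: msumr; [exact: scale_image_submod|].
rewrite addnS in ek; have [_ [v [[z ->] bsv ->]]] := IH n m y (succn_inj ek) yk.
rewrite scalerDr scalerA mulrC -scalerA; apply: (submodD (QS n m.+1)).
  by apply: msuml; [exact: apow_submod|exists (w *: z)].
by apply: msumr; [exact: scale_image_submod|apply: idmul_scale].
Qed.

Lemma apow_ideal_span_subset (bs : seq R) n (L : M -> Prop) : is_submod L ->
  (forall b, b \in bs -> forall z, L (b ^+ n *: z)) ->
  forall x, apow (ideal_span bs) full (size bs * n).+1 x -> L x.
Proof.
move=> LS; elim: bs => [|b bs IH] bsL x.
  apply: idmul_ind x => [|x y|r y ->]; [exact: submod0|exact: submodD|].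
  by rewrite scale0r => _; apply: submod0.
rewrite [size _]/= mulSn -addnS => /apow_span_cons [_ [v [[z ->] bsv ->]]].
apply: (submodD LS); first by apply: bsL; rewrite mem_head.
by apply: IH bsv => c bsc; apply: bsL; rewrite in_cons bsc orbT.
Qed.

Variable a : R -> Prop.
Hypotheses (noethR : noetherian_ring R) (aI : is_ideal a) (fgM : fg_module M).
Hypothesis a_jacobson : forall x, a x -> jacobson x.

Definition adic_core : M -> Prop := fun x => forall n, apow a full n x.

Lemma adic_core_submod : is_submod adic_core.
Proof.
have aS n := apow_submod n aI full_submod.
split=> [n|x y Kx Ky n|r x Kx n].
- exact: submod0 (aS n).
- exact: submodD (aS n) (Kx n) (Ky n).
- exact: submodZ (aS n) (Kx n).
Qed.

Definition meets_core (L : M -> Prop) :=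
  forall x, L x /\ adic_core x <-> idmul a adic_core x.

Lemma maximal_meets_core_power L b : is_submod L -> meets_core L ->
  (forall L', is_submod L' /\ meets_core L' ->
     (forall x, L x -> L' x) -> forall x, L' x -> L x) ->
  a b -> exists j, forall z, L (b ^+ j *: z).
Proof.
move=> LS Lcore Lmax ab.
have colon_incr j x : colon L (b ^+ j) x -> colon L (b ^+ j.+1) x.
  by rewrite /colon exprS -scalerA; apply: submodZ LS.
have [j stable] := noetherian_chain_stable (c := fun j => colon L (b ^+ j))
  (noetherian_fg_module noethR fgM) (fun=> colon_submod _ LS) colon_incr.
pose L' := msum L (scale_image (b ^+ j)).
have L'S : is_submod L' := msum_submod LS (scale_image_submod _).
have L'core : meets_core L'.
  move=> x; split=> [[[l [v [Ll [z ->] ->]]] Kx]|/Lcore [Lx Kx]]; last first.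
    by split=> //; apply: msuml (scale_image_submod _) Lx.
  apply/Lcore; split=> //.
  apply: (submodD LS) => //; apply: stable; rewrite /colon exprS -scalerA.
  have -> : b *: (b ^+ j *: z) = b *: (l + b ^+ j *: z) - b *: l.
    by rewrite scalerDr addrAC subrr add0r.
  apply: (submodB LS); last exact: submodZ.
  by have /Lcore [] := idmul_scale ab Kx.
exists j => z; apply: (Lmax L') => //.
  by move=> x; apply: msuml (scale_image_submod _).
by apply: msumr LS _; exists z.
Qed.

Theorem krull_intersection x : adic_core x -> x = 0.
Proof.
have noethM := noetherian_fg_module noethR fgM.
have KS := adic_core_submod.
have aKcore : meets_core (idmul a adic_core).
  by move=> y; split=> [[]//|aKy]; split=> //; apply: idmul_subset KS _ aKy.
have [L [[LS Lcore] Lmax]] := noetherian_maximal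
  (F := fun L => is_submod L /\ meets_core L) noethM
  (fun _ => @proj1 _ _) (conj (idmul_submod _ aI) aKcore).
have [bs [bsa abs]] := noetherian_regular noethR (aI : @is_submod R R^o a).
have pow_mono m n : (m <= n)%N -> forall b,
    (forall z, L (b ^+ m *: z)) -> forall z, L (b ^+ n *: z).
  by move=> mn b bm z; rewrite -(subnK mn) exprD -scalerA; apply: submodZ LS (bm _).
have [n bsn] := eventually_seq pow_mono
  (fun b bsb => maximal_meets_core_power LS Lcore Lmax (bsa b bsb)).
have core_small y : adic_core y -> idmul a adic_core y.
  move=> Ky; apply/Lcore; split=> //; apply: (apow_ideal_span_subset LS bsn).
  exact: (apowS (a := a) (b := ideal_span bs) abs (fun _ fx => fx) (Ky _)).
have [s [sK Ks]] := noethM _ KS.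
move=> /Ks; apply: (nakayama_span noethR aI a_jacobson).
by move=> y /(span_seq_min KS sK) /core_small; apply: idmulS.
Qed.

End KrullIntersection.

Section Completeness.
Variables (R : comPzRingType) (M : lmodType R) (a : R -> Prop).
Hypotheses (noethR : noetherian_ring R) (aI : is_ideal a) (fgM : fg_module M).
Hypothesis a_jacobson : forall x, a x -> jacobson x.
Implicit Types N P : M -> Prop.

Lemma apow_msum N P n x : is_submod N -> is_submod P ->
  apow a (msum N P) n x <-> msum (apow a N n) (apow a P n) x.
Proof.
move=> NS PS; split.
  elim: n x => [//|n IH] /=.
  have QS := msum_submod (idmul_submod (apow a N n) aI) (idmul_submod (apow a P n) aI).
  apply: idmul_ind; [exact: submod0 QS|by move=> ? ?; apply: submodD QS|].
  move=> r _ ar /IH [u [v [Nu Pv ->]]]; exists (r *: u), (r *: v).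
  by rewrite scalerDr; split=> //; apply: idmul_scale.
move=> [u [v [Nu Pv ->]]]; apply: (submodD (apow_submod n aI (msum_submod NS PS))).
  exact: (apowS (fun r (ar : a r) => ar) (fun _ => msuml PS) Nu).
exact: (apowS (fun r (ar : a r) => ar) (fun _ => msumr NS) Pv).
Qed.

Lemma adic_separated N x : (forall n, apow a N n x) -> x = 0.
Proof.
move=> Nx; apply: (krull_intersection noethR aI fgM a_jacobson) => n.
exact: (apowS (fun r (ar : a r) => ar) (fun _ _ => I) (Nx n)).
Qed.

Lemma complete_series N (d : nat -> M) : is_submod N -> adically_complete a N ->
  (forall n, apow a N n (d n)) ->
  exists y, N y /\ forall n, apow a N n (y - \sum_(0 <= i < n) d i).
Proof.
move=> NS [_ Ncomplete] dn; apply: (Ncomplete (fun n => \sum_(0 <= i < n) d i)) => n.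
  by apply: (submod_sum _ NS) => i _; apply: (apow_subset aI NS (dn i)).
by rewrite big_nat_recr //= addrAC subrr add0r.
Qed.

Lemma msum_complete N P : is_submod N -> is_submod P ->
  adically_complete a N -> adically_complete a P -> adically_complete a (msum N P).
Proof.
move=> NS PS Nc Pc; split=> [x _|x NPx dx]; first exact: adic_separated.
have [d dP] : exists d : nat -> M * M, forall n,
    [/\ apow a N n (d n).1, apow a P n (d n).2 & x n.+1 - x n = (d n).1 + (d n).2].
  apply: (ClassicalEpsilon.choice (fun n (uv : M * M) =>
    [/\ apow a N n uv.1, apow a P n uv.2 & x n.+1 - x n = uv.1 + uv.2])) => n.
  by have /apow_msum [//|//|u [v [? ? ?]]] := dx n; exists (u, v).
have dN n : apow a N n (d n).1 by case: (dP n).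
have dP' n : apow a P n (d n).2 by case: (dP n).
have [y1 [Ny1 y1P]] := complete_series NS Nc dN.
have [y2 [Py2 y2P]] := complete_series PS Pc dP'.
have [p [q [Np Pq x0]]] := NPx 0%N.
have xn n : x n = p + q + \sum_(0 <= i < n) ((d i).1 + (d i).2).
  rewrite -x0 -[x n](subrK (x 0)) addrC -telescope_sumr //.
  by congr (_ + _); apply: eq_bigr => i _; case: (dP i).
exists ((p + y1) + (q + y2)); split.
  by exists (p + y1), (q + y2); split=> //; apply: submodD.
move=> n; apply/apow_msum => //.
exists (y1 - \sum_(0 <= i < n) (d i).1), (y2 - \sum_(0 <= i < n) (d i).2); split=> //.
rewrite xn big_split (addrACA p y1 q y2) opprD (addrACA (p + q)) subrr add0r.
by rewrite opprD addrACA.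
Qed.

Lemma maximal_complete_greatest N N' : maximal_complete a N ->
  is_submod N' -> adically_complete a N' -> forall x, N' x -> N x.
Proof.
move=> [NS Nc Nmax] N'S N'c x N'x.
apply: (Nmax _ (msum_submod NS N'S) (msum_complete NS N'S Nc N'c)).
  by move=> y; apply: msuml N'S.
exact: msumr NS N'x.
Qed.

Definition null : M -> Prop := fun x => x = 0.

Lemma null_submod : is_submod null.
Proof. by split=> [|_ _ -> ->|r _ ->]; rewrite ?addr0 ?scaler0. Qed.

Lemma null_complete : adically_complete a null.
Proof.
split=> // x x0 _; exists 0; split=> // n.
by rewrite x0 subr0; apply: submod0 (apow_submod n aI null_submod).
Qed.

End Completeness.

Theorem lemma1p1 (R : comPzRingType) (M : lmodType R) (a : R -> Prop) :
  noetherian_ring R -> is_ideal a -> (forall x, a x -> jacobson x) ->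
  fg_module M ->
  exists N : M -> Prop,
    maximal_complete a N /\
    forall N' : M -> Prop, maximal_complete a N' -> forall x, N' x <-> N x.
Proof.
move=> noethR aI a_jacobson fgM.
have [N [[NS Nc] Nmax]] := noetherian_maximal
  (F := fun N => is_submod N /\ adically_complete a N)
  (noetherian_fg_module noethR fgM) (fun _ => @proj1 _ _)
  (conj (null_submod M) (null_complete M aI)).
have Nmc : maximal_complete a N by split=> // N' N'S N'c; apply: Nmax.
have greatest := maximal_complete_greatest noethR aI fgM a_jacobson.
exists N; split=> // N' [N'S N'c N'max] x; split.
  exact: greatest Nmc N'S N'c x.
exact: greatest (And3 N'S N'c N'max) NS Nc x.
Qed.
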